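(* Over $\mathsf{RCA}_0$: (1) $\mathsf{ER}^2_2 \lor \mathsf{I}\Sigma^0_2$ implies $\mathsf{ER}^1$; (2) $\mathsf{ER}^1$ implies $\mathsf{RT}^1$.
   Context: $\mathbb{Q}$ is a fixed primitive recursive presentation of the rationals with domain $\mathbb{N}$. A set $H\subseteq\mathbb{Q}$ is called dense if $(H,\leq_\mathbb{Q})$ is a dense linear order (understood non-trivially, so that dense sets are infinite). $\mathsf{ER}^2_2$: for every coloring $f\colon[\mathbb{Q}]^2\to 2$ there exists either an infinite set $H$ with $f(x,y)=0$ for all distinct $x,y\in H$, or a dense set $H$ with $f(x,y)=1$ for all distinct $x,y\in H$. $\mathsf{ER}^1$: for every $n$ and every $f\colon\mathbb{Q}\to n$ there exists a dense set $H\subseteq\mathbb{Q}$ on which $f$ is constant. $\mathsf{RT}^1$: for every $k$ and every $f\colon\mathbb{N}\to k$ there is an infinite set on which $f$ is constant. $\mathsf{I}\Sigma^0_2$ is the $\Sigma^0_2$ induction scheme. *)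

(** * L_2 structures (general, possibly nonstandard, Henkin models) *)
Record L2structure : Type := {
  M : Type;                 (* first-order (number) part *)
  S : Type;                 (* second-order (set) part   *)
  zero : M;
  one : M;
  add : M -> M -> M;
  mul : M -> M -> M;
  lt : M -> M -> Prop;
  mem : M -> S -> Prop
}.

Arguments zero {_}. Arguments one {_}. Arguments add {_}. Arguments mul {_}.
Arguments lt {_}. Arguments mem {_}.

(** * Syntax of arithmetical formulas (number variables in de Bruijn style,
      free set variables indexed by nat; no set quantifiers) *)
Inductive term : Type :=
  | Var (n : nat) | Zero | One | Add (t u : term) | Mul (t u : term).

Inductive formula : Type :=
  | FEq (t u : term) | FLt (t u : term) | FMem (t : term) (X : nat)
  | FNeg (f : formula) | FAnd (f g : formula) | FOr (f g : formula)
  | FImp (f g : formula)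
  | FAll (f : formula) | FEx (f : formula)
  | FBAll (t : term) (f : formula)                    (* forall x < t, f *)
  | FBEx (t : term) (f : formula).                    (* exists x < t, f *)

Fixpoint Delta0 (f : formula) : Prop :=
  match f with
  | FEq _ _ | FLt _ _ | FMem _ _ => True
  | FNeg g => Delta0 g
  | FAnd g h | FOr g h | FImp g h => Delta0 g /\ Delta0 h
  | FAll _ | FEx _ => False
  | FBAll _ g | FBEx _ g => Delta0 g
  end.

Definition Sigma1 (f : formula) : Prop :=
  match f with FEx g => Delta0 g | _ => False end.
Definition Pi1 (f : formula) : Prop :=
  match f with FAll g => Delta0 g | _ => False end.
Definition Sigma2 (f : formula) : Prop :=
  match f with FEx (FAll g) => Delta0 g | _ => False end.

Fixpoint setfree (f : formula) : Prop :=
  match f with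
  | FEq _ _ | FLt _ _ => True
  | FMem _ _ => False
  | FNeg g | FAll g | FEx g | FBAll _ g | FBEx _ g => setfree g
  | FAnd g h | FOr g h | FImp g h => setfree g /\ setfree h
  end.

Definition scons {T : Type} (a : T) (e : nat -> T) : nat -> T :=
  fun n => match n with O => a | Datatypes.S k => e k end.

Section Eval.
Variable A : L2structure.

Fixpoint teval (e : nat -> M A) (t : term) : M A :=
  match t with
  | Var n => e n
  | Zero => zero
  | One => one
  | Add t u => add (teval e t) (teval e u)
  | Mul t u => mul (teval e t) (teval e u)
  end.

Fixpoint feval (e : nat -> M A) (s : nat -> S A) (f : formula) : Prop :=
  match f with
  | FEq t u => teval e t = teval e u
  | FLt t u => lt (teval e t) (teval e u)
  | FMem t X => mem (teval e t) (s X)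
  | FNeg g => ~ feval e s g
  | FAnd g h => feval e s g /\ feval e s h
  | FOr g h => feval e s g \/ feval e s h
  | FImp g h => feval e s g -> feval e s h
  | FAll g => forall a : M A, feval (scons a e) s g
  | FEx g => exists a : M A, feval (scons a e) s g
  | FBAll t g => forall a : M A, lt a (teval e t) -> feval (scons a e) s g
  | FBEx t g => exists a : M A, lt a (teval e t) /\ feval (scons a e) s g
  end.

(** * RCA_0 (Simpson, SOSOA, Def. I.7.3 / II.1) *)
Definition BasicAxioms : Prop :=
  (forall m : M A, add m one <> zero) /\
  (forall m n : M A, add m one = add n one -> m = n) /\
  (forall m : M A, add m zero = m) /\
  (forall m n : M A, add m (add n one) = add (add m n) one) /\
  (forall m : M A, mul m zero = zero) /\
  (forall m n : M A, mul m (add n one) = add (mul m n) m) /\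
  (forall m : M A, ~ lt m zero) /\
  (forall m n : M A, lt m (add n one) <-> (lt m n \/ m = n)).

(** induction for formulas of a class [C]; variable 0 is the induction
    variable, all other number and set variables are parameters *)
Definition Induction (C : formula -> Prop) : Prop :=
  forall (f : formula), C f ->
  forall (e : nat -> M A) (s : nat -> S A),
    feval (scons zero e) s f ->
    (forall n, feval (scons n e) s f -> feval (scons (add n one) e) s f) ->
    forall n, feval (scons n e) s f.

Definition Delta01Comprehension : Prop :=
  forall (f g : formula), Sigma1 f -> Pi1 g ->
  forall (e : nat -> M A) (s : nat -> S A),
    (forall n, feval (scons n e) s f <-> feval (scons n e) s g) ->
    exists X : S A, forall n, mem n X <-> feval (scons n e) s f.

Definition RCA0 : Prop :=
  BasicAxioms /\ Induction Sigma1 /\ Delta01Comprehension.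

Definition ISigma02 : Prop := Induction Sigma2.

Definition pair (i j : M A) : M A := add (mul (add i j) (add i j)) i.

Definition infinite (H : S A) : Prop :=
  forall m : M A, exists n, lt m n /\ mem n H.

(** [F] codes a function from N (= domain of Q) into {c | c < k} *)
Definition isFunInto (F : S A) (k : M A) : Prop :=
  forall x : M A, exists c, lt c k /\ mem (pair x c) F /\
                  forall c', mem (pair x c') F -> c' = c.

(** [F] codes a coloring [N]^2 -> 2; [x,y] with x < y coded by pair x y *)
Definition two : M A := add one one.

Definition is2Coloring (F : S A) : Prop :=
  forall x y : M A, lt x y ->
    exists c, lt c two /\ mem (pair (pair x y) c) F /\
              forall c', mem (pair (pair x y) c') F -> c' = c.

Definition colorOf (F : S A) (x y c : M A) : Prop :=
  (lt x y /\ mem (pair (pair x y) c) F) \/ (lt y x /\ mem (pair (pair y x) c) F).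

Definition homogeneous (F : S A) (H : S A) (c : M A) : Prop :=
  forall x y, mem x H -> mem y H -> x <> y -> colorOf F x y c.

(** * The presentation of Q: strict order <_Q given by a fixed parameter-free
      Delta^0_1 definition (Sigma^0_1 formula qs, Pi^0_1 formula qp in the
      variables 0 (= x) and 1 (= y)) *)
Definition env2 (x y : M A) : nat -> M A := scons x (scons y (fun _ => zero)).

Definition ltQ (qs : formula) (x y : M A) : Prop :=
  forall s : nat -> S A, feval (env2 x y) s qs.

Definition QPresentationOK (qs qp : formula) : Prop :=
  (forall s x y, feval (env2 x y) s qs <-> feval (env2 x y) s qp) /\
  (forall x, ~ ltQ qs x x) /\
  (forall x y z, ltQ qs x y -> ltQ qs y z -> ltQ qs x z) /\
  (forall x y, ltQ qs x y \/ x = y \/ ltQ qs y x) /\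
  (forall x y, ltQ qs x y -> exists z, ltQ qs x z /\ ltQ qs z y) /\
  (forall x, exists y, ltQ qs x y) /\
  (forall x, exists y, ltQ qs y x).

(** dense (non-trivially): at least two elements, and dense under <=_Q *)
Definition denseQ (qs : formula) (H : S A) : Prop :=
  (exists x y, mem x H /\ mem y H /\ x <> y) /\
  (forall x y, mem x H -> mem y H -> ltQ qs x y ->
     exists z, mem z H /\ ltQ qs x z /\ ltQ qs z y).

Definition ER22 (qs : formula) : Prop :=
  forall F : S A, is2Coloring F ->
    (exists H, infinite H /\ homogeneous F H zero) \/
    (exists H, denseQ qs H /\ homogeneous F H one).

Definition ER1 (qs : formula) : Prop :=
  forall (n : M A) (F : S A), isFunInto F n ->
    exists (H : S A) (c : M A), denseQ qs H /\ forall x, mem x H -> mem (pair x c) F.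

Definition RT1 : Prop :=
  forall (k : M A) (F : S A), isFunInto F k ->
    exists (H : S A) (c : M A), infinite H /\ forall x, mem x H -> mem (pair x c) F.

End Eval.

(* ER^1 -> RT^1: a dense set is infinite.  Otherwise the elements of some
   interval (y, z) of it are bounded, so finitely many; one of them is
   <_Q-least, and density between y and it gives a smaller one.

   I Sigma^0_2 -> ER^1: for f : Q -> k, no interval avoids all k colors while
   every interval avoids the colors below 0, so Sigma^0_2 induction gives a
   largest j such that some interval (a, b) avoids all colors below j.  Then
   every subinterval of (a, b) meets color j, and the points of color j in
   (a, b) form a dense set.

   ER^2_2 -> ER^1: color x < y by 0 if f increases from x to y, by 1
   otherwise.  An infinite 0-homogeneous set would carry k + 1 increasing
   colors.  Along a dense 1-homogeneous set H, f does not increase, so by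
   Sigma^0_1 induction it is constant from some x0 on; the tail of H above x0
   is still dense. *)

From Stdlib Require Import Classical FunctionalExtensionality Ring.

Fixpoint tsubst (σ : nat -> term) (t : term) : term :=
  match t with
  | Var n => σ n
  | Zero => Zero
  | One => One
  | Add t u => Add (tsubst σ t) (tsubst σ u)
  | Mul t u => Mul (tsubst σ t) (tsubst σ u)
  end.

Definition shift : nat -> term := fun i => Var (Datatypes.S i).

Definition up (σ : nat -> term) : nat -> term :=
  fun n => match n with O => Var O | Datatypes.S k => tsubst shift (σ k) end.

Fixpoint fsubst (σ : nat -> term) (f : formula) : formula :=
  match f with
  | FEq t u => FEq (tsubst σ t) (tsubst σ u)
  | FLt t u => FLt (tsubst σ t) (tsubst σ u)
  | FMem t X => FMem (tsubst σ t) X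
  | FNeg g => FNeg (fsubst σ g)
  | FAnd g h => FAnd (fsubst σ g) (fsubst σ h)
  | FOr g h => FOr (fsubst σ g) (fsubst σ h)
  | FImp g h => FImp (fsubst σ g) (fsubst σ h)
  | FAll g => FAll (fsubst (up σ) g)
  | FEx g => FEx (fsubst (up σ) g)
  | FBAll t g => FBAll (tsubst σ t) (fsubst (up σ) g)
  | FBEx t g => FBEx (tsubst σ t) (fsubst (up σ) g)
  end.

Definition pairT (t u : term) : term := Add (Mul (Add t u) (Add t u)) t.
Arguments pairT : simpl never.

(* The components of [pair x y] are bounded by it, so decoding a pair needs only
   bounded quantifiers; see [feval_pairs_such_that] for the variable layout. *)
Definition pairs_such_that (h : formula) : formula :=
  FBEx (Add (Var 1) One)
    (FBEx (Add (Var 2) One) (FAnd (FEq (Var 3) (pairT (Var 1) (Var 0))) h)).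
Arguments pairs_such_that : simpl never.

Lemma teval_pairT A e t u : teval A e (pairT t u) = pair A (teval A e t) (teval A e u).
Proof. reflexivity. Qed.

Lemma teval_tsubst A e σ t :
  teval A e (tsubst σ t) = teval A (fun n => teval A e (σ n)) t.
Proof. induction t; simpl; congruence. Qed.

Lemma teval_up A (e : nat -> M A) σ a :
  (fun n => teval A (scons a e) (up σ n)) = scons a (fun n => teval A e (σ n)).
Proof.
  extensionality n; destruct n as [|n]; simpl; [reflexivity|].
  now rewrite teval_tsubst.
Qed.

Lemma feval_fsubst A f : forall e s σ,
  feval A e s (fsubst σ f) <-> feval A (fun n => teval A e (σ n)) s f.
Proof.
  induction f; intros e s σ; simpl; rewrite ?teval_tsubst; try tauto;
  try (rewrite IHf; tauto);
  try (rewrite IHf1, IHf2; tauto);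
  setoid_rewrite IHf; setoid_rewrite teval_up; tauto.
Qed.

Lemma feval_shift A f e s a :
  feval A (scons a e) s (fsubst shift f) <-> feval A e s f.
Proof. now rewrite feval_fsubst. Qed.

Lemma Delta0_fsubst f : forall σ, Delta0 (fsubst σ f) <-> Delta0 f.
Proof.
  induction f; intros σ; simpl; try tauto; try (rewrite IHf1, IHf2; tauto); apply IHf.
Qed.

Lemma feval_setfree A f : setfree f ->
  forall e s s', feval A e s f <-> feval A e s' f.
Proof.
  induction f; intros Hf e s s'; simpl in *; try tauto;
  try (rewrite (IHf Hf e s s'); tauto);
  try (destruct Hf as [H1 H2]; rewrite (IHf1 H1 e s s'), (IHf2 H2 e s s'); tauto);
  setoid_rewrite (IHf Hf _ s s'); tauto.
Qed.

Lemma Sigma1_shape f : Sigma1 f -> exists g, f = FEx g /\ Delta0 g.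
Proof. destruct f; try contradiction. now exists f. Qed.

Lemma Pi1_shape f : Pi1 f -> exists g, f = FAll g /\ Delta0 g.
Proof. destruct f; try contradiction. now exists f. Qed.

Section Model.

Variable A : L2structure.
Hypothesis HR : RCA0 A.

(* Formulas are evaluated in a set environment even when they mention no set
   variable, and nothing guarantees that [S A] is inhabited: [X0] fills the
   unused set variables. *)
Variable X0 : S A.

Definition sets0 : nat -> S A := fun _ => X0.
Definition nums0 : nat -> M A := fun _ => zero.

Lemma induction_Sigma1 (g : formula) : Delta0 g ->
  forall (e : nat -> M A) (s : nat -> S A) (P : M A -> Prop),
  (forall n, feval A (scons n e) s (FEx g) <-> P n) ->
  P zero -> (forall n, P n -> P (add n one)) -> forall n, P n.
Proof.
  intros Hg e s P HP H0 HS n. destruct HR as [_ [HI _]].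
  apply HP, HI; [exact Hg | now apply HP | intros m Hm; now apply HP, HS, HP].
Qed.

Lemma induction_Delta0 (g : formula) : Delta0 g ->
  forall (e : nat -> M A) (s : nat -> S A) (P : M A -> Prop),
  (forall n, feval A (scons n e) s g <-> P n) ->
  P zero -> (forall n, P n -> P (add n one)) -> forall n, P n.
Proof.
  intros Hg e s P HP.
  apply (induction_Sigma1 (fsubst shift g) ltac:(now apply Delta0_fsubst) e s).
  intro n; simpl. setoid_rewrite feval_shift. rewrite <- HP.
  split; [now intros [_ H] | now exists zero].
Qed.

Lemma comprehension_Delta0 (g : formula) : Delta0 g ->
  forall (e : nat -> M A) (s : nat -> S A) (P : M A -> Prop),
  (forall n, feval A (scons n e) s g <-> P n) -> exists X, forall n, mem n X <-> P n.
Proof.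
  intros Hg e s P HP. destruct HR as [_ [_ HC]].
  assert (Hg' : Delta0 (fsubst shift g)) by now apply Delta0_fsubst.
  destruct (HC (FEx (fsubst shift g)) (FAll (fsubst shift g)) Hg' Hg' e s) as [X HX].
  - intro n. simpl. setoid_rewrite feval_shift.
    split; [intros [_ H] _; exact H | intros H; exists zero; apply (H zero)].
  - exists X. intro n. rewrite HX, <- HP. simpl. setoid_rewrite feval_shift.
    split; [now intros [_ H] | now exists zero].
Qed.

(* The induction predicate is read off the goal [forall n, P n]; it must be
   literally the evaluation of [f] with [n] at index 0 and [env] above it. *)
Ltac induction_on_in f env sets :=
  refine (induction_Delta0 f ltac:(simpl; tauto) env sets _ _ _ _);
  [intro; simpl; reflexivity | | ].
Ltac induction_on f env := induction_on_in f env sets0.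
Ltac sigma1_induction_on f env sets :=
  refine (induction_Sigma1 f ltac:(simpl; tauto) env sets _ _ _ _);
  [intro; simpl; reflexivity | | ].

Lemma succ_neq_zero (m : M A) : add m one <> zero. Proof. apply HR. Qed.
Lemma succ_inj (m n : M A) : add m one = add n one -> m = n. Proof. apply HR. Qed.
Lemma add_zero_r (m : M A) : add m zero = m. Proof. apply HR. Qed.
Lemma add_succ_r (m n : M A) : add m (add n one) = add (add m n) one. Proof. apply HR. Qed.
Lemma mul_zero_r (m : M A) : mul m zero = zero. Proof. apply HR. Qed.
Lemma mul_succ_r (m n : M A) : mul m (add n one) = add (mul m n) m. Proof. apply HR. Qed.
Lemma nlt_zero (m : M A) : ~ lt m zero. Proof. apply HR. Qed.
Lemma lt_succ_iff (m n : M A) : lt m (add n one) <-> lt m n \/ m = n. Proof. apply HR. Qed.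

Lemma zero_or_succ (n : M A) : n = zero \/ exists p, n = add p one.
Proof.
  enough (H : forall n : M A, n = zero \/ exists p, lt p n /\ n = add p one).
  { destruct (H n) as [H0 | [p [_ Hp]]]; [left | right; exists p]; assumption. }
  induction_on (FOr (FEq (Var 0) Zero) (FBEx (Var 0) (FEq (Var 1) (Add (Var 0) One)))) nums0.
  - now left.
  - intros m _. right. exists m. split; [apply lt_succ_iff; now right | reflexivity].
Qed.

Lemma add_zero_l (n : M A) : add zero n = n.
Proof.
  revert n. induction_on (FEq (Add Zero (Var 0)) (Var 0)) nums0.
  - apply add_zero_r.
  - intros n IH. now rewrite add_succ_r, IH.
Qed.

Lemma add_succ_l (m n : M A) : add (add m one) n = add (add m n) one.
Proof.
  revert n.
  induction_on (FEq (Add (Add (Var 1) One) (Var 0)) (Add (Add (Var 1) (Var 0)) One))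
    (scons m nums0).
  - now rewrite !add_zero_r.
  - intros n IH. now rewrite !add_succ_r, IH.
Qed.

Lemma add_comm (m n : M A) : add m n = add n m.
Proof.
  revert n. induction_on (FEq (Add (Var 1) (Var 0)) (Add (Var 0) (Var 1))) (scons m nums0).
  - now rewrite add_zero_r, add_zero_l.
  - intros n IH. now rewrite add_succ_r, IH, add_succ_l.
Qed.

Lemma add_assoc (a b n : M A) : add a (add b n) = add (add a b) n.
Proof.
  revert n.
  induction_on (FEq (Add (Var 1) (Add (Var 2) (Var 0))) (Add (Add (Var 1) (Var 2)) (Var 0)))
    (scons a (scons b nums0)).
  - now rewrite !add_zero_r.
  - intros n IH. now rewrite !add_succ_r, IH.
Qed.

Lemma mul_zero_l (n : M A) : mul zero n = zero.
Proof.
  revert n. induction_on (FEq (Mul Zero (Var 0)) Zero) nums0.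
  - apply mul_zero_r.
  - intros n IH. now rewrite mul_succ_r, IH, add_zero_r.
Qed.

Lemma mul_succ_l (m n : M A) : mul (add m one) n = add (mul m n) n.
Proof.
  revert n.
  induction_on (FEq (Mul (Add (Var 1) One) (Var 0)) (Add (Mul (Var 1) (Var 0)) (Var 0)))
    (scons m nums0).
  - now rewrite !mul_zero_r, add_zero_r.
  - intros n IH. rewrite !mul_succ_r, IH, <- !add_assoc. f_equal.
    now rewrite !add_succ_r, (add_comm n m).
Qed.

Lemma mul_comm (m n : M A) : mul m n = mul n m.
Proof.
  revert n. induction_on (FEq (Mul (Var 1) (Var 0)) (Mul (Var 0) (Var 1))) (scons m nums0).
  - now rewrite mul_zero_r, mul_zero_l.
  - intros n IH. now rewrite mul_succ_r, IH, mul_succ_l.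
Qed.

Lemma mul_add_distr_l (a b n : M A) : mul a (add b n) = add (mul a b) (mul a n).
Proof.
  revert n.
  induction_on (FEq (Mul (Var 1) (Add (Var 2) (Var 0)))
                    (Add (Mul (Var 1) (Var 2)) (Mul (Var 1) (Var 0))))
    (scons a (scons b nums0)).
  - now rewrite !add_zero_r, mul_zero_r, add_zero_r.
  - intros n IH. now rewrite add_succ_r, !mul_succ_r, IH, add_assoc.
Qed.

Lemma mul_assoc (a b n : M A) : mul (mul a b) n = mul a (mul b n).
Proof.
  revert n.
  induction_on (FEq (Mul (Mul (Var 1) (Var 2)) (Var 0)) (Mul (Var 1) (Mul (Var 2) (Var 0))))
    (scons a (scons b nums0)).
  - now rewrite !mul_zero_r.
  - intros n IH. now rewrite !mul_succ_r, mul_add_distr_l, IH.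
Qed.

Lemma mul_one_l (n : M A) : mul one n = n.
Proof.
  rewrite mul_comm, <- (add_zero_l one), mul_succ_r, mul_zero_r. apply add_zero_l.
Qed.

Lemma model_semiring : semi_ring_theory (zero : M A) one add mul eq.
Proof.
  constructor.
  - apply add_zero_l.
  - apply add_comm.
  - apply add_assoc.
  - apply mul_one_l.
  - apply mul_zero_l.
  - apply mul_comm.
  - intros; symmetry; apply mul_assoc.
  - intros n m p. rewrite !(mul_comm _ p). apply mul_add_distr_l.
Qed.

Add Ring model_ring : model_semiring.

Lemma add_cancel_l (a b n : M A) : add n a = add n b -> a = b.
Proof.
  rewrite (add_comm n a), (add_comm n b). revert n.
  induction_on (FImp (FEq (Add (Var 1) (Var 0)) (Add (Var 2) (Var 0))) (FEq (Var 1) (Var 2)))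
    (scons a (scons b nums0)).
  - now rewrite !add_zero_r.
  - intros n IH H. rewrite !add_succ_r in H. now apply IH, succ_inj.
Qed.

Lemma lt_iff (a b : M A) : lt a b <-> exists d, b = add (add a d) one.
Proof.
  split.
  - revert b.
    refine (induction_Sigma1
      (FOr (FNeg (FLt (Var 2) (Var 1))) (FEq (Var 1) (Add (Add (Var 2) (Var 0)) One)))
      ltac:(simpl; tauto) (scons a nums0) sets0 _ _ _ _).
    + intro n; simpl. split.
      * intros [d [H | H]] Hl; [contradiction | now exists d].
      * intro H. destruct (classic (lt a n)) as [Hl | Hl].
        -- destruct (H Hl) as [d Hd]. exists d. now right.
        -- exists zero. now left.
    + intro H. destruct (nlt_zero _ H).
    + intros n IH Hl. apply lt_succ_iff in Hl. destruct Hl as [Hl | ->].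
      * destruct (IH Hl) as [d ->]. exists (add d one). ring.
      * exists zero. ring.
  - intros [d ->]. revert d.
    induction_on (FLt (Var 1) (Add (Add (Var 1) (Var 0)) One)) (scons a nums0).
    + rewrite add_zero_r. apply lt_succ_iff. now right.
    + intros n IH. rewrite add_succ_r. apply lt_succ_iff. now left.
Qed.

Lemma nlt_add_l (a d : M A) : ~ lt (add a d) a.
Proof.
  rewrite lt_iff. intros [e He].
  apply (succ_neq_zero (add d e)), (add_cancel_l _ _ a).
  rewrite add_zero_r. rewrite He at 2. ring.
Qed.

Lemma lt_irrefl (a : M A) : ~ lt a a.
Proof. rewrite <- (add_zero_r a) at 1. apply nlt_add_l. Qed.

Lemma lt_trans (a b c : M A) : lt a b -> lt b c -> lt a c.
Proof.
  rewrite !lt_iff. intros [d ->] [d' ->]. exists (add (add d d') one). ring.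
Qed.

Lemma lt_asym (a b : M A) : lt a b -> ~ lt b a.
Proof. intros H1 H2. exact (lt_irrefl a (lt_trans _ _ _ H1 H2)). Qed.

Lemma lt_neq (a b : M A) : lt a b -> a <> b.
Proof. intros H ->. exact (lt_irrefl _ H). Qed.

Lemma lt_add_r (a d : M A) : lt a (add (add a d) one).
Proof. apply lt_iff. now exists d. Qed.

Lemma lt_zero_succ (p : M A) : lt zero (add p one).
Proof. rewrite <- (add_zero_l p) at 1. apply lt_add_r. Qed.

Lemma lt_succ_diag (a : M A) : lt a (add a one).
Proof. apply lt_succ_iff. now right. Qed.

Lemma zero_neq_one : (zero : M A) <> one.
Proof. apply lt_neq. rewrite <- (add_zero_l one). apply lt_zero_succ. Qed.

Lemma lt_succ_l (a b : M A) : lt a b -> lt (add a one) b \/ add a one = b.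
Proof.
  rewrite lt_iff. intros [d ->].
  destruct (zero_or_succ d) as [-> | [p ->]]; [right; ring | left].
  apply lt_iff. exists p. ring.
Qed.

Lemma lt_trichotomy (a b : M A) : lt a b \/ a = b \/ lt b a.
Proof.
  revert b.
  induction_on (FOr (FLt (Var 1) (Var 0)) (FOr (FEq (Var 1) (Var 0)) (FLt (Var 0) (Var 1))))
    (scons a nums0).
  - destruct (zero_or_succ a) as [-> | [p ->]]; [now right; left | right; right].
    apply lt_zero_succ.
  - intros n [H | [-> | H]].
    + left. apply lt_succ_iff. now left.
    + left. apply lt_succ_diag.
    + destruct (lt_succ_l _ _ H) as [H1 | H1]; [now right; right | now right; left].
Qed.

Lemma nlt_le (a b : M A) : ~ lt a b -> lt b a \/ b = a.
Proof. intro H. destruct (lt_trichotomy a b) as [H1 | [-> | H1]]; tauto. Qed.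

Lemma nlt_lt_succ (m w : M A) : ~ lt m w -> lt w (add m one).
Proof. intro H. apply lt_succ_iff, nlt_le, H. Qed.

Lemma lt_add_mono_r (a b j : M A) : lt a b -> lt (add a j) (add b j).
Proof. rewrite !lt_iff. intros [d ->]. exists d. ring. Qed.

Lemma pair_lt_of_add_lt (i j i' j' : M A) :
  lt (add i j) (add i' j') -> lt (pair A i j) (pair A i' j').
Proof.
  unfold pair. rewrite !lt_iff. intros [d Hd]. rewrite Hd.
  exists (add (add (add j (mul (add i j) (add (mul (add one one) d) one)))
                   (add (mul d d) (add d d))) i').
  ring.
Qed.

Lemma pair_inj (i j i' j' : M A) : pair A i j = pair A i' j' -> i = i' /\ j = j'.
Proof.
  intro H.
  assert (Hs : add i j = add i' j').
  { destruct (lt_trichotomy (add i j) (add i' j')) as [H1 | [H1 | H1]]; auto;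
      apply pair_lt_of_add_lt in H1; rewrite H in H1; destruct (lt_irrefl _ H1). }
  unfold pair in H. rewrite Hs in H. apply add_cancel_l in H. subst i'.
  split; [reflexivity | exact (add_cancel_l _ _ _ Hs)].
Qed.

Lemma lt_pair_l (i j : M A) : lt i (add (pair A i j) one).
Proof. apply lt_iff. exists (mul (add i j) (add i j)). unfold pair. ring. Qed.

Lemma lt_pair_r (i j : M A) : lt j (add (pair A i j) one).
Proof.
  apply lt_iff. unfold pair.
  destruct (zero_or_succ (add i j)) as [H | [p H]].
  - assert (j = zero) as ->.
    { destruct (zero_or_succ j) as [-> | [q ->]]; [reflexivity|].
      destruct (succ_neq_zero (add i q)). rewrite <- H. ring. }
    rewrite H. exists i. ring.
  - exists (add (mul (add p one) p) (add i i)). rewrite H.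
    transitivity (add (add (add (add i j) (mul (add p one) p)) i) one); [|ring].
    rewrite H. ring.
Qed.

Lemma feval_pairs_such_that h (w n : M A) e s :
  feval A (scons w (scons n e)) s (pairs_such_that h) <->
  exists x y, n = pair A x y /\ feval A (scons y (scons x (scons w (scons n e)))) s h.
Proof.
  unfold pairs_such_that. simpl. split.
  - intros [x [_ [y [_ [Hn Hh]]]]]. now exists x, y.
  - intros [x [y [-> Hh]]]. exists x. split; [apply lt_pair_l|].
    exists y. split; [apply lt_pair_r | now split].
Qed.

Lemma relation_comprehension_Delta01 (q0 p0 : formula) : Delta0 q0 -> Delta0 p0 ->
  (forall x y, feval A (env2 A x y) sets0 (FEx q0) <-> feval A (env2 A x y) sets0 (FAll p0)) ->
  exists X, forall x y, mem (pair A x y) X <-> feval A (env2 A x y) sets0 (FEx q0).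
Proof.
  intros Dq Dp Hqp.
  set (σ := fun k => match k with 0 => Var 2 | 1 => Var 1 | 2 => Var 0 | _ => Zero end).
  assert (Henv : forall (x y w n : M A) e,
    (fun k => teval A (scons y (scons x (scons w (scons n e)))) (σ k)) = scons w (env2 A x y)).
  { intros. extensionality k. now destruct k as [|[|[|k]]]. }
  set (P := fun n => exists x y, n = pair A x y /\ feval A (env2 A x y) sets0 (FEx q0)).
  assert (HS : forall n,
    feval A (scons n nums0) sets0 (FEx (pairs_such_that (fsubst σ q0))) <-> P n).
  { intro n. simpl feval at 1. setoid_rewrite feval_pairs_such_that.
    setoid_rewrite feval_fsubst. setoid_rewrite Henv. split.
    - intros [w [x [y [Hn Hw]]]]. exists x, y. split; [exact Hn|]. now exists w.
    - intros [x [y [Hn [w Hw]]]]. now exists w, x, y. }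
  assert (HP : forall n,
    feval A (scons n nums0) sets0 (FAll (pairs_such_that (fsubst σ p0))) <-> P n).
  { intro n. simpl feval at 1. setoid_rewrite feval_pairs_such_that.
    setoid_rewrite feval_fsubst. setoid_rewrite Henv. split.
    - intros H. destruct (H zero) as [x [y [Hn _]]]. exists x, y. split; [exact Hn|].
      apply Hqp. intro w. destruct (H w) as [x' [y' [Hn' Hw]]].
      rewrite Hn in Hn'. now destruct (pair_inj _ _ _ _ Hn') as [<- <-].
    - intros [x [y [Hn Hxy]]] w. exists x, y. split; [exact Hn|].
      exact (proj1 (Hqp x y) Hxy w). }
  destruct HR as [_ [_ HC]].
  assert (Dq' : Delta0 (pairs_such_that (fsubst σ q0))) by (simpl; rewrite Delta0_fsubst; tauto).
  assert (Dp' : Delta0 (pairs_such_that (fsubst σ p0))) by (simpl; rewrite Delta0_fsubst; tauto).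
  destruct (HC (FEx (pairs_such_that (fsubst σ q0))) (FAll (pairs_such_that (fsubst σ p0)))
              Dq' Dp' nums0 sets0 (fun n => iff_trans (HS n) (iff_sym (HP n)))) as [X HX].
  exists X. intros x y. rewrite HX, HS. split.
  - intros [x' [y' [Hn Hxy]]]. now destruct (pair_inj _ _ _ _ Hn) as [<- <-].
  - intro Hxy. now exists x, y.
Qed.

Lemma induction_jump (C : formula -> Prop) (f : formula) : Induction A C -> C f ->
  forall e s (P : M A -> Prop), (forall n, feval A (scons n e) s f <-> P n) ->
  P zero -> forall n, ~ P n -> exists j, P j /\ ~ P (add j one).
Proof.
  intros HI Hf e s P HP H0 n Hn. apply NNPP. intro Hjump.
  apply Hn, HP, HI; [exact Hf | now apply HP|].
  intros m Hm. apply HP. apply HP in Hm. apply NNPP. intro Hm'. apply Hjump. now exists m.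
Qed.

Lemma homogeneous_lt (G H : S A) (c x y : M A) : homogeneous A G H c ->
  mem x H -> mem y H -> lt x y -> mem (pair A (pair A x y) c) G.
Proof.
  intros Hhom Hx Hy Hxy.
  destruct (Hhom x y Hx Hy (lt_neq _ _ Hxy)) as [[_ Hc] | [Hyx _]]; [exact Hc|].
  destruct (lt_asym _ _ Hxy Hyx).
Qed.

Section Rationals.

Variables qs qp : formula.
Hypothesis qs_Sigma1 : Sigma1 qs.
Hypothesis qp_Pi1 : Pi1 qp.
Hypothesis qs_setfree : setfree qs.
Hypothesis HQ : QPresentationOK A qs qp.

Local Notation "x <Q y" := (ltQ A qs x y) (at level 70).

Lemma ltQ_irrefl x : ~ x <Q x. Proof. apply HQ. Qed.
Lemma ltQ_trans x y z : x <Q y -> y <Q z -> x <Q z. Proof. apply HQ. Qed.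
Lemma ltQ_trichotomy x y : x <Q y \/ x = y \/ y <Q x. Proof. apply HQ. Qed.
Lemma ltQ_dense x y : x <Q y -> exists z, x <Q z /\ z <Q y. Proof. apply HQ. Qed.
Lemma ltQ_no_max x : exists y, x <Q y. Proof. apply HQ. Qed.

Lemma ltQ_neq x y : x <Q y -> x <> y.
Proof. intros H ->. exact (ltQ_irrefl _ H). Qed.

Lemma ltQ_iff_Sigma1 s x y : x <Q y <-> feval A (env2 A x y) s qs.
Proof.
  split; [now intro H | intros H s'].
  now apply (feval_setfree A qs qs_setfree _ s s').
Qed.

Lemma ltQ_iff_Pi1 s x y : x <Q y <-> feval A (env2 A x y) s qp.
Proof. rewrite <- (proj1 HQ). apply ltQ_iff_Sigma1. Qed.

Lemma ltQ_coded : exists Qs : S A, forall x y, mem (pair A x y) Qs <-> x <Q y.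
Proof.
  destruct (Sigma1_shape qs qs_Sigma1) as [q0 [Eq Dq]].
  destruct (Pi1_shape qp qp_Pi1) as [p0 [Ep Dp]].
  destruct (relation_comprehension_Delta01 q0 p0 Dq Dp) as [Qs HQs].
  - intros x y. rewrite <- Eq, <- Ep, <- ltQ_iff_Sigma1. apply ltQ_iff_Pi1.
  - exists Qs. intros x y. rewrite HQs, <- Eq. symmetry. apply ltQ_iff_Sigma1.
Qed.

Lemma exists_ltQ_min_below (D : S A) (b : M A) :
  (exists w, lt w b /\ mem w D) ->
  exists w, lt w b /\ mem w D /\ forall v, lt v b -> mem v D -> ~ v <Q w.
Proof.
  destruct ltQ_coded as [Qs HQs].
  enough (H : forall b, (exists w, lt w b /\ mem w D) ->
    exists w, lt w b /\ (mem w D /\ forall v, lt v b -> mem v D -> ~ mem (pair A v w) Qs)).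
  { intro Hb. destruct (H b Hb) as [w [Hw [HwD Hmin]]]. exists w.
    repeat split; [exact Hw | exact HwD|]. intros v Hv HvD. rewrite <- HQs. now apply Hmin. }
  clear b. induction_on_in
    (FImp (FBEx (Var 0) (FMem (Var 0) 0))
          (FBEx (Var 0) (FAnd (FMem (Var 0) 0)
             (FBAll (Var 1) (FImp (FMem (Var 0) 0) (FNeg (FMem (pairT (Var 0) (Var 1)) 1)))))))
    nums0 (scons D (scons Qs sets0)).
  - intros [w [Hw _]]. destruct (nlt_zero _ Hw).
  - intros b IH [w [Hw HwD]].
    destruct (classic (exists w, lt w b /\ mem w D)) as [Hex | Hnex].
    + destruct (IH Hex) as [w0 [Hw0 [Hw0D Hmin]]].
      destruct (classic (mem b D /\ b <Q w0)) as [[HbD Hbw0] | Hb].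
      * exists b. split; [apply lt_succ_diag|]. split; [exact HbD|].
        intros v Hv HvD Hvb. rewrite HQs in Hvb. apply lt_succ_iff in Hv.
        destruct Hv as [Hv | ->]; [|exact (ltQ_irrefl _ Hvb)].
        apply (Hmin v Hv HvD), HQs. exact (ltQ_trans _ _ _ Hvb Hbw0).
      * exists w0. split; [apply lt_succ_iff; now left|]. split; [exact Hw0D|].
        intros v Hv HvD Hvw0. apply lt_succ_iff in Hv.
        destruct Hv as [Hv | ->]; [exact (Hmin v Hv HvD Hvw0)|].
        apply Hb. split; [exact HvD | now apply HQs].
    + assert (w = b) as ->.
      { apply lt_succ_iff in Hw. destruct Hw as [Hw | Hw]; [|exact Hw].
        destruct Hnex. now exists w. }
      exists b. split; [apply lt_succ_diag|]. split; [exact HwD|].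
      intros v Hv HvD Hvb. apply lt_succ_iff in Hv. destruct Hv as [Hv | ->].
      * apply Hnex. now exists v.
      * rewrite HQs in Hvb. exact (ltQ_irrefl _ Hvb).
Qed.

Lemma denseQ_unbounded_between (H : S A) : denseQ A qs H ->
  forall y z, mem y H -> mem z H -> y <Q z ->
  forall m, exists w, mem w H /\ y <Q w /\ w <Q z /\ lt m w.
Proof.
  intros [_ Hdense] y z Hy Hz Hyz m. destruct ltQ_coded as [Qs HQs].
  destruct (comprehension_Delta0
     (FAnd (FMem (Var 0) 0)
           (FAnd (FMem (pairT (Var 1) (Var 0)) 1) (FMem (pairT (Var 0) (Var 2)) 1)))
     ltac:(simpl; tauto) (scons y (scons z nums0)) (scons H (scons Qs sets0))
     (fun w => mem w H /\ mem (pair A y w) Qs /\ mem (pair A w z) Qs)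
     ltac:(intro; reflexivity)) as [D HD].
  assert (HD' : forall w, mem w D <-> mem w H /\ y <Q w /\ w <Q z)
    by (intro w; now rewrite HD, !HQs).
  apply NNPP. intro Hbounded.
  assert (Hbelow : forall w, mem w D -> lt w (add m one)).
  { intros w Hw. apply nlt_lt_succ. intro Hmw. apply Hbounded. exists w.
    apply HD' in Hw. tauto. }
  destruct (Hdense y z Hy Hz Hyz) as [w1 [Hw1 [Hyw1 Hw1z]]].
  assert (Hw1D : mem w1 D) by (apply HD'; auto).
  destruct (exists_ltQ_min_below D (add m one)) as [w0 [_ [Hw0 Hmin]]].
  { exists w1. split; [apply Hbelow|]; exact Hw1D. }
  apply HD' in Hw0. destruct Hw0 as [Hw0 [Hyw0 Hw0z]].
  destruct (Hdense y w0 Hy Hw0 Hyw0) as [v [Hv [Hyv Hvw0]]].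
  assert (HvD : mem v D) by (apply HD'; split; [|split]; [| |apply (ltQ_trans _ _ _ Hvw0)]; auto).
  exact (Hmin v (Hbelow v HvD) HvD Hvw0).
Qed.

Lemma denseQ_ordered_pair (H : S A) : denseQ A qs H ->
  exists y z, mem y H /\ mem z H /\ y <Q z.
Proof.
  intros [[x [y [Hx [Hy Hxy]]]] _].
  destruct (ltQ_trichotomy x y) as [H1 | [H1 | H1]]; [| contradiction |].
  - now exists x, y.
  - now exists y, x.
Qed.

Lemma denseQ_infinite (H : S A) : denseQ A qs H -> infinite A H.
Proof.
  intros Hd m. destruct (denseQ_ordered_pair H Hd) as [y [z [Hy [Hz Hyz]]]].
  destruct (denseQ_unbounded_between H Hd y z Hy Hz Hyz m) as [w [Hw [_ [_ Hmw]]]].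
  now exists w.
Qed.

Lemma denseQ_tail (H : S A) (x0 : M A) : denseQ A qs H ->
  exists T, (forall w, mem w T <-> mem w H /\ lt x0 w) /\ denseQ A qs T.
Proof.
  intro Hd.
  destruct (comprehension_Delta0 (FAnd (FMem (Var 0) 0) (FLt (Var 1) (Var 0)))
     ltac:(simpl; tauto) (scons x0 nums0) (scons H sets0)
     (fun w => mem w H /\ lt x0 w) ltac:(intro; reflexivity)) as [T HT].
  exists T. split; [exact HT | split].
  - destruct (denseQ_ordered_pair H Hd) as [y [z [Hy [Hz Hyz]]]].
    destruct (denseQ_unbounded_between H Hd y z Hy Hz Hyz x0) as [w1 [Hw1 [Hyw1 [_ Hw1x]]]].
    destruct (denseQ_unbounded_between H Hd y w1 Hy Hw1 Hyw1 x0) as [w2 [Hw2 [_ [Hw2w1 Hw2x]]]].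
    exists w1, w2. rewrite !HT. repeat split; auto.
    intros ->. exact (ltQ_irrefl _ Hw2w1).
  - intros u v Hu Hv Huv. apply HT in Hu. apply HT in Hv.
    destruct (denseQ_unbounded_between H Hd u v (proj1 Hu) (proj1 Hv) Huv x0)
      as [w [Hw [Huw [Hwv Hxw]]]].
    exists w. rewrite HT. auto.
Qed.

Lemma RT1_of_ER1 : ER1 A qs -> RT1 A.
Proof.
  intros HER1 k F HF. destruct (HER1 k F HF) as [H [c [Hd Hcol]]].
  exists H, c. split; [exact (denseQ_infinite H Hd) | exact Hcol].
Qed.

Definition leQ (x y : M A) : Prop := x = y \/ x <Q y.

Lemma denseQ_of_meets_subintervals (a b : M A) (P : M A -> Prop) (H : S A) :
  a <Q b ->
  (forall u v, leQ a u -> leQ v b -> u <Q v -> exists x, u <Q x /\ x <Q v /\ P x) ->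
  (forall x, mem x H <-> a <Q x /\ x <Q b /\ P x) -> denseQ A qs H.
Proof.
  intros Hab Hmeets HH. split.
  - destruct (ltQ_dense a b Hab) as [m [Ham Hmb]].
    destruct (Hmeets a m (or_introl eq_refl) (or_intror Hmb) Ham) as [x [Hax [Hxm Hx]]].
    destruct (Hmeets m b (or_intror Ham) (or_introl eq_refl) Hmb) as [y [Hmy [Hyb Hy]]].
    exists x, y. rewrite !HH. split; [|split].
    + repeat split; [exact Hax | exact (ltQ_trans _ _ _ Hxm Hmb) | exact Hx].
    + repeat split; [exact (ltQ_trans _ _ _ Ham Hmy) | exact Hyb | exact Hy].
    + exact (ltQ_neq _ _ (ltQ_trans _ _ _ Hxm Hmy)).
  - intros u v Hu Hv Huv. rewrite HH in Hu, Hv.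
    destruct Hu as [Hau [Hub _]]. destruct Hv as [Hav [Hvb _]].
    destruct (Hmeets u v (or_intror Hau) (or_intror Hvb) Huv) as [w [Huw [Hwv Hw]]].
    exists w. rewrite HH. repeat split; auto.
    + exact (ltQ_trans _ _ _ Hau Huw).
    + exact (ltQ_trans _ _ _ Hwv Hvb).
Qed.

Section Colorings.

Variables (k : M A) (F : S A).
Hypothesis HF : isFunInto A F k.

Local Notation col x c := (mem (pair A x c) F).

Lemma color_unique x c c' : col x c -> col x c' -> c = c'.
Proof.
  intros H1 H2. destruct (HF x) as [d [_ [_ Hu]]]. now rewrite (Hu c H1), (Hu c' H2).
Qed.

Lemma color_lt x c : col x c -> lt c k.
Proof.
  intro Hc. destruct (HF x) as [d [Hd [Hxd _]]]. now rewrite (color_unique x c d Hc Hxd).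
Qed.

Definition avoids (j a b : M A) : Prop :=
  forall x, a <Q x -> x <Q b -> forall c, lt c j -> ~ col x c.

Lemma avoids_Sigma2 : exists f e s, Sigma2 f /\
  forall j, feval A (scons j e) s f <-> exists a b, a <Q b /\ avoids j a b.
Proof.
  destruct ltQ_coded as [Qs HQs].
  exists (FEx (FAll (pairs_such_that
    (FAnd (FMem (pairT (Var 1) (Var 0)) 1)
          (FImp (FAnd (FMem (pairT (Var 1) (Var 2)) 1) (FMem (pairT (Var 2) (Var 0)) 1))
                (FBAll (Var 4) (FNeg (FMem (pairT (Var 3) (Var 0)) 0)))))))),
    nums0, (scons F (scons Qs sets0)).
  split; [unfold pairs_such_that; simpl; tauto|]. intro j. cbn.
  setoid_rewrite feval_pairs_such_that. cbn. setoid_rewrite teval_pairT. cbn.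
  setoid_rewrite HQs. split.
  - intros [p Hp]. destruct (Hp zero) as [a [b [Hpab [Hab _]]]].
    exists a, b. split; [exact Hab|]. intros x Hax Hxb.
    destruct (Hp x) as [a' [b' [Hpab' [_ Havoid]]]].
    rewrite Hpab in Hpab'. destruct (pair_inj _ _ _ _ Hpab') as [<- <-].
    exact (Havoid (conj Hax Hxb)).
  - intros [a [b [Hab Havoid]]]. exists (pair A a b). intro x. exists a, b.
    split; [reflexivity | split; [exact Hab|]]. intros [Hax Hxb]. exact (Havoid x Hax Hxb).
Qed.

Lemma color_meets_subintervals (j a b : M A) : avoids j a b ->
  (forall a' b', a' <Q b' -> ~ avoids (add j one) a' b') ->
  forall u v, leQ a u -> leQ v b -> u <Q v -> exists x, u <Q x /\ x <Q v /\ col x j.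
Proof.
  intros Havoid Hjump u v Hau Hvb Huv. apply NNPP. intro Hmiss.
  apply (Hjump u v Huv). intros x Hux Hxv c Hc. apply lt_succ_iff in Hc.
  destruct Hc as [Hc | ->]; [|intro Hx; apply Hmiss; now exists x].
  apply (Havoid x); [| |exact Hc].
  - destruct Hau as [-> | Hau]; [exact Hux | exact (ltQ_trans _ _ _ Hau Hux)].
  - destruct Hvb as [<- | Hvb]; [exact Hxv | exact (ltQ_trans _ _ _ Hxv Hvb)].
Qed.

Lemma monochromatic_dense_of_ISigma02 : ISigma02 A ->
  exists H c, denseQ A qs H /\ forall x, mem x H -> col x c.
Proof.
  intro HI. destruct avoids_Sigma2 as [f [e [s [Hf Hfeval]]]].
  destruct (induction_jump _ f HI Hf e s _ Hfeval) with (n := k)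
    as [j [[a [b [Hab Havoid]]] Hjump]].
  - destruct (ltQ_no_max zero) as [b Hb]. exists zero, b. split; [exact Hb|].
    intros x _ _ c Hc. destruct (nlt_zero _ Hc).
  - intros [a [b [Hab Havoid]]]. destruct (ltQ_dense a b Hab) as [x [Hax Hxb]].
    destruct (HF x) as [c [Hc [Hxc _]]]. exact (Havoid x Hax Hxb c Hc Hxc).
  - destruct ltQ_coded as [Qs HQs].
    destruct (comprehension_Delta0
       (FAnd (FMem (pairT (Var 1) (Var 0)) 1)
             (FAnd (FMem (pairT (Var 0) (Var 2)) 1) (FMem (pairT (Var 0) (Var 3)) 0)))
       ltac:(simpl; tauto) (scons a (scons b (scons j nums0))) (scons F (scons Qs sets0))
       (fun x => mem (pair A a x) Qs /\ mem (pair A x b) Qs /\ col x j)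
       ltac:(intro; reflexivity)) as [H HH].
    exists H, j. split.
    + apply (denseQ_of_meets_subintervals a b (fun x => col x j) H Hab).
      * apply (color_meets_subintervals j a b Havoid).
        intros a' b' Ha'b' Havoid'. apply Hjump. now exists a', b'.
      * intro x. now rewrite HH, !HQs.
    + intros x Hx. apply HH in Hx. apply Hx.
Qed.

Definition ascent (x y : M A) : Prop :=
  exists a, lt a k /\ exists b, lt b k /\ (col x a /\ (col y b /\ lt a b)).

Lemma ascent_iff x y cx cy : col x cx -> col y cy -> (ascent x y <-> lt cx cy).
Proof.
  intros Hx Hy. split.
  - intros [a [_ [b [_ [Ha [Hb Hab]]]]]].
    now rewrite (color_unique x cx a Hx Ha), (color_unique y cy b Hy Hb).
  - intro H. exists cx. split; [exact (color_lt x cx Hx)|].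
    exists cy. split; [exact (color_lt y cy Hy) | auto].
Qed.

Lemma ascent_coloring : exists G, is2Coloring A G /\ forall x y c,
  mem (pair A (pair A x y) c) G <->
  lt x y /\ ((c = zero /\ ascent x y) \/ (c = one /\ ~ ascent x y)).
Proof.
  set (ascentF := FBEx (Var 5) (FBEx (Var 6) (FAnd (FMem (pairT (Var 3) (Var 1)) 0)
                    (FAnd (FMem (pairT (Var 2) (Var 0)) 0) (FLt (Var 1) (Var 0)))))).
  destruct (comprehension_Delta0
    (FBEx (Add (Var 0) One) (FBEx (Add (Var 1) One) (FBEx (Add (Var 1) One)
     (FBEx (Add (Var 2) One) (FAnd (FEq (Var 4) (pairT (Var 3) (Var 2)))
       (FAnd (FEq (Var 3) (pairT (Var 1) (Var 0))) (FAnd (FLt (Var 1) (Var 0))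
         (FOr (FAnd (FEq (Var 2) Zero) ascentF) (FAnd (FEq (Var 2) One) (FNeg ascentF))))))))))
    ltac:(simpl; tauto) (scons k nums0) (scons F sets0)
    (fun N => exists p, lt p (add N one) /\ exists c, lt c (add N one) /\
       exists x, lt x (add p one) /\ exists y, lt y (add p one) /\
       (N = pair A p c /\ (p = pair A x y /\ (lt x y /\
       ((c = zero /\ ascent x y) \/ (c = one /\ ~ ascent x y))))))
    ltac:(intro; reflexivity)) as [G HG].
  assert (HGmem : forall x y c, mem (pair A (pair A x y) c) G <->
            lt x y /\ ((c = zero /\ ascent x y) \/ (c = one /\ ~ ascent x y))).
  { intros x y c. rewrite HG. split.
    - intros [p [_ [c' [_ [x' [_ [y' [_ [Hpc [Hxy R]]]]]]]]]].
      destruct (pair_inj _ _ _ _ Hpc) as [<- <-].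
      now destruct (pair_inj _ _ _ _ Hxy) as [<- <-].
    - intro R. exists (pair A x y). split; [apply lt_pair_l|].
      exists c. split; [apply lt_pair_r|]. exists x. split; [apply lt_pair_l|].
      exists y. split; [apply lt_pair_r | auto]. }
  exists G. split; [|exact HGmem].
  intros x y Hxy. destruct (classic (ascent x y)) as [Ha | Ha].
  - exists zero. split; [apply lt_zero_succ|]. split; [apply HGmem; auto|].
    intros c' Hc'. apply HGmem in Hc'. tauto.
  - exists one. split; [apply lt_succ_diag|]. split; [apply HGmem; auto|].
    intros c' Hc'. apply HGmem in Hc'. tauto.
Qed.

Lemma no_infinite_ascent (H : S A) : infinite A H ->
  ~ (forall x y, mem x H -> mem y H -> lt x y -> ascent x y).
Proof.
  intros Hinf Hasc.
  enough (Hge : forall j, exists x, mem x H /\ exists c, lt c k /\ (col x c /\ ~ lt c j)).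
  { destruct (Hge k) as [x [_ [c [Hc [_ Hnc]]]]]. contradiction. }
  sigma1_induction_on
    (FAnd (FMem (Var 0) 1) (FBEx (Var 2) (FAnd (FMem (pairT (Var 1) (Var 0)) 0)
       (FNeg (FLt (Var 0) (Var 2))))))
    (scons k nums0) (scons F (scons H sets0)).
  - destruct (Hinf zero) as [x [_ Hx]]. destruct (HF x) as [c [Hc [Hxc _]]].
    exists x. split; [exact Hx|]. exists c. repeat split; [exact Hc | exact Hxc | apply nlt_zero].
  - intros j [x [Hx [c [_ [Hxc Hcj]]]]].
    destruct (Hinf x) as [y [Hxy Hy]]. destruct (HF y) as [d [Hd [Hyd _]]].
    pose proof (proj1 (ascent_iff x y c d Hxc Hyd) (Hasc x y Hx Hy Hxy)) as Hcd.
    exists y. split; [exact Hy|]. exists d. repeat split; [exact Hd | exact Hyd|].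
    assert (Hjd : lt j d) by (destruct (nlt_le _ _ Hcj) as [Hjc | <-];
                               [exact (lt_trans _ _ _ Hjc Hcd) | exact Hcd]).
    intro Hdj. apply lt_succ_iff in Hdj.
    destruct Hdj as [Hdj | ->]; [exact (lt_asym _ _ Hjd Hdj) | exact (lt_irrefl _ Hjd)].
Qed.

Lemma eventually_constant_color (H : S A) : infinite A H ->
  (forall x y, mem x H -> mem y H -> lt x y -> ~ ascent x y) ->
  exists x0 c0, mem x0 H /\ forall y, mem y H -> lt x0 y -> col y c0.
Proof.
  intros Hinf Hnasc. apply NNPP. intro Hdrop.
  assert (Hdrops : forall x c, mem x H -> col x c ->
            exists y d, mem y H /\ lt x y /\ col y d /\ lt d c).
  { intros x c Hx Hxc. apply NNPP. intro Hno. apply Hdrop. exists x, c.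
    split; [exact Hx|]. intros y Hy Hxy. destruct (HF y) as [d [_ [Hyd _]]].
    destruct (lt_trichotomy d c) as [Hdc | [-> | Hcd]]; [| exact Hyd |].
    - destruct Hno. now exists y, d.
    - destruct (Hnasc x y Hx Hy Hxy). now apply (ascent_iff x y c d). }
  enough (Hlow : forall j, exists x, mem x H /\ exists c, lt c k /\ (col x c /\ lt (add c j) k)).
  { destruct (Hlow k) as [x [_ [c [_ [_ Hck]]]]]. rewrite add_comm in Hck.
    exact (nlt_add_l _ _ Hck). }
  sigma1_induction_on
    (FAnd (FMem (Var 0) 1) (FBEx (Var 2) (FAnd (FMem (pairT (Var 1) (Var 0)) 0)
       (FLt (Add (Var 0) (Var 2)) (Var 3)))))
    (scons k nums0) (scons F (scons H sets0)).
  - destruct (Hinf zero) as [x [_ Hx]]. destruct (HF x) as [c [Hc [Hxc _]]].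
    exists x. split; [exact Hx|]. exists c. repeat split; [exact Hc | exact Hxc|].
    now rewrite add_zero_r.
  - intros j [x [Hx [c [_ [Hxc Hcj]]]]].
    destruct (Hdrops x c Hx Hxc) as [y [d [Hy [_ [Hyd Hdc]]]]].
    exists y. split; [exact Hy|]. exists d. repeat split; [exact (color_lt y d Hyd) | exact Hyd|].
    rewrite add_succ_r, <- add_succ_l.
    destruct (lt_succ_l _ _ Hdc) as [Hdc' | <-]; [|exact Hcj].
    exact (lt_trans _ _ _ (lt_add_mono_r _ _ j Hdc') Hcj).
Qed.

Lemma monochromatic_dense_of_ER22 : ER22 A qs ->
  exists H c, denseQ A qs H /\ forall x, mem x H -> col x c.
Proof.
  intro HE. destruct ascent_coloring as [G [HG HGmem]].
  destruct (HE G HG) as [[H [Hinf Hhom]] | [H [Hd Hhom]]].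
  - exfalso. apply (no_infinite_ascent H Hinf). intros x y Hx Hy Hxy.
    destruct (proj1 (HGmem x y zero) (homogeneous_lt _ _ _ _ _ Hhom Hx Hy Hxy))
      as [_ [[_ Ha] | [E _]]]; [exact Ha | destruct (zero_neq_one E)].
  - destruct (eventually_constant_color H (denseQ_infinite H Hd)) as [x0 [c0 [_ Hconst]]].
    { intros x y Hx Hy Hxy Ha.
      destruct (proj1 (HGmem x y one) (homogeneous_lt _ _ _ _ _ Hhom Hx Hy Hxy))
        as [_ [[E _] | [_ Hna]]]; [exact (zero_neq_one (eq_sym E)) | exact (Hna Ha)]. }
    destruct (denseQ_tail H x0 Hd) as [T [HT HdT]].
    exists T, c0. split; [exact HdT|]. intros y Hy. apply HT in Hy. now apply Hconst.
Qed.

End Colorings.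
End Rationals.
End Model.

Theorem mainTheorem4 :
  forall (qs qp : formula),
    Sigma1 qs -> Pi1 qp -> setfree qs -> setfree qp ->
  forall (A : L2structure),
    RCA0 A -> QPresentationOK A qs qp ->
    ((ER22 A qs \/ ISigma02 A) -> ER1 A qs) /\ (ER1 A qs -> RT1 A).
Proof.
  intros qs qp Hqs Hqp Hsf _ A HR HQ. split.
  - intros [HE | HI] n F HF.
    + exact (monochromatic_dense_of_ER22 A HR F qs qp Hqs Hqp Hsf HQ n F HF HE).
    + exact (monochromatic_dense_of_ISigma02 A HR F qs qp Hqs Hqp Hsf HQ n F HF HI).
  - intros HER1 k F. exact (RT1_of_ER1 A HR F qs qp Hqs Hqp Hsf HQ HER1 k F).
Qed.
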